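(* If $n,m\ge 2$, then the LC orbit of the complete bipartite graph $K_{n,m}$ has size $|\mathcal{O}(K_{n,m})|=nm+n+m+3$.
   Context: For a graph $G$ and vertex $v$, the local complement $c_v(G)$ is the graph on $V(G)$ obtained by complementing the edges among the neighbours of $v$. $\mathcal{O}(G)$ is the set of all graphs on the labelled vertex set $V(G)$ obtainable from $G$ by finite sequences of local complements; graphs are labelled, so isomorphic but distinct graphs are counted separately. *)

From mathcomp Require Import all_boot.
Set Implicit Arguments. Unset Strict Implicit. Unset Printing Implicit Defensive.

Definition graph (V : finType) := {ffun V -> {ffun V -> bool}}.

Definition simple_graph (V : finType) (G : graph V) : bool :=
  [forall x, ~~ G x x] && [forall x, forall y, G x y == G y x].

Definition local_complement (V : finType) (v : V) (G : graph V) : graph V :=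
  [ffun x => [ffun y =>
     if (x != y) && G v x && G v y then ~~ G x y else G x y]].

Definition lc_step (V : finType) : rel (graph V) :=
  fun G H => [exists v, H == local_complement v G].

Definition lc_orbit (V : finType) (G : graph V) : {set graph V} :=
  [set H | connect (@lc_step V) G H].

Definition Kbip (n m : nat) : graph ('I_n + 'I_m)%type :=
  [ffun x => [ffun y =>
     match x, y with
     | inl _, inr _ => true
     | inr _, inl _ => true
     | _, _ => false
     end]].

From HB Require Import structures.
From mathcomp Require Import all_boot zify.
Set Implicit Arguments. Unset Strict Implicit. Unset Printing Implicit Defensive.

(* Up to a choice of vertices, the graphs reachable from K_{n,m} come in six
   shapes, and local complementation at any vertex maps each shape to another
   one; conversely, every shape is reached from K_{n,m} in at most three
   steps.  For n, m >= 2 distinct shapes (with their distinguished vertices)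
   have distinct edge sets, so the orbit is in bijection with the shapes,
   of which there are 3 + n + m + nm. *)

Section LCOrbit.
Variable V : finType.

Lemma lc_orbit_lc (G H : graph V) (v : V) :
  H \in lc_orbit G -> local_complement v H \in lc_orbit G.
Proof.
rewrite !inE => GH; apply: connect_trans GH (connect1 _).
by apply/existsP; exists v.
Qed.

Lemma lc_orbit_sub (G : graph V) (S : {set graph V}) :
  G \in S -> (forall H v, H \in S -> local_complement v H \in S) ->
  lc_orbit G \subset S.
Proof.
move=> SG SlC; apply/subsetP => H; rewrite inE => /connectP [p].
elim: p G SG => [|G' p IHp] G SG /= => [_ -> // | /andP [/existsP [v /eqP ->]]].
exact/IHp/SlC.
Qed.

End LCOrbit.

(* With A = 'I_n and B = 'I_m the two sides: [Bip] is K_{n,m}; [SplitL] makes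
   A a clique joined to the independent set B; [PendL a] is a clique on
   B + {a} with the other vertices of A pendant at a; [DStar a b] is the
   double star with centres a and b.  [SplitR] and [PendR b] are the mirror
   images. *)
Variant lc_shape (n m : nat) :=
  | Bip
  | SplitL
  | SplitR
  | PendL of 'I_n
  | PendR of 'I_m
  | DStar of 'I_n & 'I_m.
Arguments Bip {n m}.
Arguments SplitL {n m}.
Arguments SplitR {n m}.
Arguments PendL {n m}.
Arguments PendR {n m}.
Arguments DStar {n m}.

Section Shapes.
Variables n m : nat.
Local Notation V := ('I_n + 'I_m)%type.
Local Notation shape := (lc_shape n m).

Definition shape_code (s : shape) :
    option (option (option ('I_n + 'I_m + 'I_n * 'I_m))) :=
  match s with
  | Bip => None
  | SplitL => Some None
  | SplitR => Some (Some None)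
  | PendL a => Some (Some (Some (inl (inl a))))
  | PendR b => Some (Some (Some (inl (inr b))))
  | DStar a b => Some (Some (Some (inr (a, b))))
  end.

Definition code_shape c : shape :=
  match c with
  | None => Bip
  | Some None => SplitL
  | Some (Some None) => SplitR
  | Some (Some (Some (inl (inl a)))) => PendL a
  | Some (Some (Some (inl (inr b)))) => PendR b
  | Some (Some (Some (inr (a, b)))) => DStar a b
  end.

Lemma shape_codeK : cancel shape_code code_shape. Proof. by case. Qed.

HB.instance Definition _ := Finite.copy shape (can_type shape_codeK).

Lemma card_shape : #|{: shape}| = n * m + n + m + 3.
Proof.
have codeK : cancel code_shape shape_code by case=> [[[[[a|b]|[a b]]|]|]|].
rewrite (bij_eq_card (Bijective shape_codeK codeK)).
by rewrite !card_option card_sum card_prod card_sum !card_ord; lia.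
Qed.

Definition shape_adj (s : shape) (x y : V) : bool :=
  (x != y) && match s with
  | Bip => is_inl x != is_inl y
  | SplitL => is_inl x || is_inl y
  | SplitR => ~~ is_inl x || ~~ is_inl y
  | PendL a => [|| x == inl a, y == inl a | ~~ (is_inl x || is_inl y)]
  | PendR b => [|| x == inr b, y == inr b | is_inl x && is_inl y]
  | DStar a b =>
      let hub z := if z is inl _ then inl a else inr b in
      [|| x == hub y, y == hub x | (x == hub x) && (y == hub y)]
  end.

Definition shape_graph (s : shape) : graph V :=
  [ffun x => [ffun y => shape_adj s x y]].

Definition shape_lc (s : shape) (v : V) : shape :=
  match s, v with
  | Bip, inl _ => SplitR
  | Bip, inr _ => SplitL
  | SplitL, inl a => PendL a
  | SplitL, inr _ => Bip
  | SplitR, inl _ => Bip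
  | SplitR, inr b => PendR b
  | PendL a, inl a' => if a' == a then SplitL else PendL a
  | PendL a, inr b => DStar a b
  | PendR b, inl a => DStar a b
  | PendR b, inr b' => if b' == b then SplitR else PendR b
  | DStar a b, inl a' => if a' == a then PendR b else DStar a b
  | DStar a b, inr b' => if b' == b then PendL a else DStar a b
  end.

Local Ltac decide_eqs :=
  repeat (simpl; try done; match goal with
  | H : ?x <> ?x |- _ => by case: H
  | H : (?x == ?x) = false |- _ => by rewrite eqxx in H
  | |- context[inl ?x == inl ?y] => change (inl x == inl y) with (x == y)
  | |- context[inr ?x == inr ?y] => change (inr x == inr y) with (x == y)
  | |- context[inl ?x == inr ?y] => change (inl x == inr y) with false
  | |- context[inr ?x == inl ?y] => change (inr x == inl y) with false
  | |- context[?x == ?x] => rewrite eqxx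
  | |- context[?x == ?y] => case: (x =P y) => [?|?]; subst
  end).

Lemma local_complement_shape (s : shape) (v : V) :
  local_complement v (shape_graph s) = shape_graph (shape_lc s v).
Proof.
apply/ffunP => x; apply/ffunP => y; rewrite !ffunE /shape_adj.
by case: s => [||| a | b | a b]; case: v => v; case: x => x; case: y => y; decide_eqs.
Qed.

Section Injectivity.
Variables (a0 a1 : 'I_n) (b0 b1 : 'I_m).
Hypotheses (a01 : a0 != a1) (b01 : b0 != b1).

(* Besides the edges among a0, a1, b0, b1, two shapes with the same graph
   agree on the edges between the two sides at their distinguished vertices;
   these finitely many edges already separate the shapes. *)
Local Ltac probe E s :=
  match s with
  | PendL ?a => move: (E (inl a) (inr b0)) (E (inl a) (inr b1))
  | PendR ?b => move: (E (inl a0) (inr b)) (E (inl a1) (inr b))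
  | DStar ?a ?b => move: (E (inl a) (inr b))
  | _ => idtac
  end.

Lemma shape_graph_inj : injective shape_graph.
Proof.
move=> s1 s2 /ffunP eq12.
have {eq12} E x y : shape_adj s1 x y = shape_adj s2 x y.
  by move/ffunP: (eq12 x) => /(_ y); rewrite !ffunE.
have [a01F b01F] := (negbTE a01, negbTE b01).
case: s1 E => [||| a | b | a b] E; case: s2 E => [||| a' | b' | a' b'] E;
  match goal with |- ?l = ?r => probe E l; probe E r end;
  move: (E (inl a0) (inl a1)) (E (inr b0) (inr b1));
  move: (E (inl a0) (inr b0)) (E (inl a0) (inr b1));
  move: (E (inl a1) (inr b0)) (E (inl a1) (inr b1));
  rewrite /shape_adj; decide_eqs.
Qed.

End Injectivity.

Lemma Kbip_shape : Kbip n m = shape_graph Bip.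
Proof.
apply/ffunP => x; apply/ffunP => y; rewrite !ffunE /shape_adj.
by case: x; case: y => * /=; rewrite ?andbF.
Qed.

Lemma lc_orbit_Kbip (a0 : 'I_n) (b0 : 'I_m) :
  lc_orbit (Kbip n m) = [set shape_graph s | s : shape].
Proof.
rewrite Kbip_shape; apply/eqP; rewrite eqEsubset; apply/andP; split.
  apply: lc_orbit_sub => [|_ v /imsetP [s _ ->]]; first exact: imset_f.
  by rewrite local_complement_shape imset_f.
apply/subsetP => _ /imsetP [s _ ->].
set O := lc_orbit _.
have reach_lc s' v : shape_graph s' \in O -> shape_graph (shape_lc s' v) \in O.
  by rewrite -local_complement_shape; apply: lc_orbit_lc.
have reach_Bip : shape_graph Bip \in O by rewrite inE.
have reach_SplitL : shape_graph SplitL \in O := reach_lc _ (inr b0) reach_Bip.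
have reach_SplitR : shape_graph SplitR \in O := reach_lc _ (inl a0) reach_Bip.
have reach_PendL a : shape_graph (PendL a) \in O := reach_lc _ (inl a) reach_SplitL.
case: s => [||| a | b | a b] //.
- exact: reach_PendL.
- exact: reach_lc _ (inr b) reach_SplitR.
- exact: reach_lc _ (inr b) (reach_PendL a).
Qed.

End Shapes.

Theorem theorem4 (n m : nat) (hn : 2 <= n) (hm : 2 <= m) :
  #|lc_orbit (Kbip n m)| = n * m + n + m + 3.
Proof.
pose a0 : 'I_n := Ordinal (ltnW hn); pose a1 : 'I_n := Ordinal hn.
pose b0 : 'I_m := Ordinal (ltnW hm); pose b1 : 'I_m := Ordinal hm.
rewrite (lc_orbit_Kbip a0 b0) card_imset ?card_shape //.
exact: (@shape_graph_inj n m a0 a1 b0 b1).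
Qed.
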